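(* Let $k$ be a field, and let $a,b,\alpha,\beta$ be integers with $1\leq\alpha<a$, $1\leq \beta<b$ and $a+\beta\leq b+\alpha$. Let $H(t)=\sum_i h_it^i$ be the Hilbert series of $B=k[x,y]/(x^a, y^b, x^\alpha y^\beta)$. Then: \begin{itemize} \item $H$ is unimodal; \item $h_{i}=h_{i-1}+1$ for every degree $i\geq 1$ up to the first degree where the maximum value of $h$ is attained; \item after it reaches its maximum, the sequence $h_i$ weakly decreases, with $h_{i}-h_{i+1}\in\{0,1,2\}$ for each such $i$; \item the maximum value is attained in degree $\min\{a,\beta+\alpha\}-1$ (and possibly in other degrees as well); \item the socle degree of $B$ (the largest $i$ with $h_i\neq 0$) is $b+\alpha-2$; \item $H$ is symmetric if and only if $a+\beta=b$; \item $B$ is \emph{not} almost centered if and only if either $b\geq a+\beta+2$, or ($a-\alpha\geq 2$, $\beta\geq 2$ and $b\leq a+\beta-2$). \end{itemize}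
   Context: For a graded Artinian algebra with Hilbert function $h_i=\dim_k B_i$, nonzero exactly for $p\leq i\leq q$ ($h_p,h_q\neq 0$), the Hilbert series is symmetric if $h_{p+i}=h_{q-i}$ for all $i$. With socle degree $D$, $B$ is almost centered if either $h_{i-1} \leq h_{D-i} \leq h_i$ for all $0 \leq i \leq \lfloor D/2 \rfloor$, or $h_{D-i+1} \leq h_{i} \leq h_{D-i}$ for all $0 \leq i \leq \lfloor D/2 \rfloor$ (with $h_j=0$ for $j<0$ or $j>D$). *)

From HB Require Import structures.
From mathcomp Require Import all_boot all_order all_algebra.
Set Implicit Arguments. Unset Strict Implicit. Unset Printing Implicit Defensive.
Import Order.TTheory GRing.Theory Num.Theory.

(* The degree-i part k[x,y]_i is modelled
   as the k-vector space 'rV[k]_(i.+1): the j-th standard basis row vector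
   delta_mx 0 j stands for the monomial x^j y^(i-j). *)

Definition in_ideal (a b al be u v : nat) : bool :=
  [|| a <= u, b <= v | (al <= u) && (be <= v)].

Definition ideal_deg (k : fieldType) (a b al be i : nat) : {vspace 'rV[k]_(i.+1)} :=
  (<< [seq (@delta_mx k 1 i.+1 ord0 j : 'rV[k]_(i.+1)) | j : 'I_(i.+1) <- enum 'I_(i.+1) & in_ideal a b al be (nat_of_ord j) (i - j)] >>)%VS.

Definition hilb (k : fieldType) (a b al be : nat) (i : nat) : nat :=
  (\dim (fullv : {vspace 'rV[k]_(i.+1)}) - \dim (ideal_deg k a b al be i))%N.

Definition unimodal (h : nat -> nat) : Prop :=
  exists m, (forall i j, i <= j -> j <= m -> h i <= h j) /\
            (forall i j, m <= i -> i <= j -> h j <= h i).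

Definition is_max_deg (h : nat -> nat) (p : nat) : Prop := forall i, h i <= h p.

Definition first_max_deg (h : nat -> nat) (p : nat) : Prop :=
  is_max_deg h p /\ forall j, j < p -> ~ is_max_deg h j.

Definition socle_deg (h : nat -> nat) (D : nat) : Prop :=
  h D <> 0 /\ forall i, D < i -> h i = 0.

Definition symmetric_hs (h : nat -> nat) : Prop :=
  exists p q, p <= q /\ (forall i, h i <> 0 <-> p <= i <= q) /\
    forall i, i <= q - p -> h (p + i) = h (q - i).

Definition hext (h : nat -> nat) (D : nat) (j : int) : nat :=
  if ((0 <= j)%R && (j <= D%:Z)%R) then h `|j|%N else 0.

Definition almost_centered (h : nat -> nat) (D : nat) : Prop :=
  (forall i : nat, i <= D./2 ->
     hext h D (i%:Z - 1)%R <= hext h D (D%:Z - i%:Z)%R <= hext h D i%:Z)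
  \/
  (forall i : nat, i <= D./2 ->
     hext h D (D%:Z - i%:Z + 1)%R <= hext h D i%:Z <= hext h D (D%:Z - i%:Z)%R).

(* Counting monomials by inclusion-exclusion over the generators x^a, y^b,
   x^al y^be and their lcms x^a y^be, x^al y^b, x^a y^b (the lcm of all three
   and of the first two coincide) gives
     h_i = (i+1) - (i+1-a)_+ - (i+1-b)_+ - (i+1-al-be)_+ + (i+1-a-be)_+ + (i+1-b-al)_+,
   that is H(t) (1-t)^2 = 1 - t^a - t^b - t^(al+be) + t^(a+be) + t^(b+al).
   Every claim is then a property of this piecewise linear function: its slope
   is 1 up to min(a, b, al+be), lies in {0,-1,-2} afterwards, and it vanishes
   exactly beyond b+al-2.  When b = a+be the numerator factors as
   (1-t^a)(1-t^(al+be)), the Hilbert series of a complete intersection, whence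
   the symmetry. *)

From HB Require Import structures.
From mathcomp Require Import all_boot all_order all_algebra zify.
From Stdlib Require Import FunctionalExtensionality.
Set Implicit Arguments. Unset Strict Implicit. Unset Printing Implicit Defensive.
Import GRing.Theory.

Lemma dim_span_delta_filter (k : fieldType) n (P : pred 'I_n) :
  \dim << [seq (delta_mx ord0 j : 'rV[k]_n) | j <- enum 'I_n & P j] >>%VS
  = count P (enum 'I_n).
Proof.
set e := fun j : 'I_n => (delta_mx ord0 j : 'rV[k]_n).
have e_basis : basis_of fullv [seq e j | j <- enum 'I_n].
  rewrite basisEdim size_map size_enum_ord dimvf dim_matrix mul1r leqnn andbT.
  apply/subvP => v _; rewrite [v]row_sum_delta.
  apply: memv_suml => j _; apply/memvZ/memv_span/map_f.
  by rewrite mem_enum.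
have : free [seq e j | j <- enum 'I_n & P j].
  have := basis_free e_basis.
  by rewrite -(perm_free (perm_map e (permEl (perm_filterC P _)))) map_cat => /catl_free.
by move/eqnP->; rewrite size_map size_filter.
Qed.

Lemma hilb_count (k : fieldType) a b al be i :
  hilb k a b al be i = i.+1 - count (fun u => in_ideal a b al be u (i - u)) (iota 0 i.+1).
Proof.
by rewrite /hilb /ideal_deg dim_span_delta_filter dimvf dim_matrix mul1r -val_enum_ord count_map.
Qed.

Lemma count_iota_interval lo hi n :
  count (fun u => lo <= u < hi) (iota 0 n) = minn hi n - lo.
Proof.
elim: n => [|n IHn]; first by rewrite minn0.
by rewrite -addn1 iotaD count_cat IHn /=; case: leqP; case: ltnP; lia.
Qed.

Lemma count_divisible p q i :
  count (fun u => (p <= u) && (q <= i - u)) (iota 0 i.+1) = i.+1 - (p + q).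
Proof.
rewrite (_ : i.+1 - (p + q) = minn (i.+1 - q) i.+1 - p); last lia.
rewrite -count_iota_interval.
apply: eq_in_count => u; rewrite mem_iota => /andP[_ lt_ui]; lia.
Qed.

Lemma count_predU3 (T : Type) (A B C : pred T) s :
  count (fun x => [|| A x, B x | C x]) s + count (predI A B) s + count (predI A C) s
    + count (predI B C) s
  = count A s + count B s + count C s + count (fun x => [&& A x, B x & C x]) s.
Proof.
elim: s => [|x s IHs] //=.
by case: (A x); case: (B x); case: (C x); rewrite /= ?add0n; lia.
Qed.

Lemma count_in_ideal a b al be i : al < a -> be < b ->
  count (fun u => in_ideal a b al be u (i - u)) (iota 0 i.+1)
    + (i.+1 - (a + be)) + (i.+1 - (b + al))
  = (i.+1 - a) + (i.+1 - b) + (i.+1 - (al + be)).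
Proof.
move=> lt_al_a lt_be_b.
pose mon p q u := (p <= u) && (q <= i - u).
have ideal_mon : (fun u => in_ideal a b al be u (i - u))
    =1 (fun u => [|| mon a 0 u, mon 0 b u | mon al be u]).
  by move=> u; rewrite /mon /in_ideal /=; lia.
have lcm_x_y : predI (mon a 0) (mon 0 b) =1 mon a b by move=> u; rewrite /mon /=; lia.
have lcm_x_xy : predI (mon a 0) (mon al be) =1 mon a be by move=> u; rewrite /mon /=; lia.
have lcm_y_xy : predI (mon 0 b) (mon al be) =1 mon al b by move=> u; rewrite /mon /=; lia.
have lcm_x_y_xy : (fun u => [&& mon a 0 u, mon 0 b u & mon al be u]) =1 mon a b.
  by move=> u; rewrite /mon /=; lia.
have := count_predU3 (mon a 0) (mon 0 b) (mon al be) (iota 0 i.+1).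
rewrite (eq_count ideal_mon) (eq_count lcm_x_y) (eq_count lcm_x_xy) (eq_count lcm_y_xy).
rewrite (eq_count lcm_x_y_xy) !count_divisible addn0 add0n.
lia.
Qed.

Definition hilbF a b al be i : nat :=
  (i.+1 + (i.+1 - (a + be)) + (i.+1 - (b + al)))
  - ((i.+1 - a) + (i.+1 - b) + (i.+1 - (al + be))).

Lemma hilbE (k : fieldType) a b al be : al < a -> be < b ->
  hilb k a b al be =1 hilbF a b al be.
Proof.
move=> lt_al_a lt_be_b i.
by rewrite hilb_count /hilbF -(count_in_ideal i lt_al_a lt_be_b) !subnDr.
Qed.

Section UnimodalSteps.
Variables (h : nat -> nat) (m : nat).
Hypothesis h_up : forall i, i < m -> h i <= h i.+1.
Hypothesis h_down : forall i, m <= i -> h i.+1 <= h i.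

Lemma nondecr_upto i j : i <= j -> j <= m -> h i <= h j.
Proof.
move=> le_ij le_jm; apply: (@homo_leq_in _ [pred k | k <= m] h (fun x y => x <= y)) => //.
- exact: leq_trans.
- by move=> x y; rewrite !inE => ? ? k; rewrite inE; lia.
- by move=> x; rewrite !inE => _; apply: h_up.
- by rewrite inE (leq_trans le_ij).
Qed.

Lemma nonincr_from i j : m <= i -> i <= j -> h j <= h i.
Proof.
move=> le_mi le_ij; apply: (@homo_leq_in _ [pred k | m <= k] h (fun x y => y <= x)) => //.
- by move=> y x z /= le_yx le_zy; apply: leq_trans le_yx.
- by move=> x y; rewrite !inE => ? ? k; rewrite inE; lia.
- by move=> x; rewrite !inE => le_mx _; apply: h_down.
- by rewrite inE (leq_trans le_mi).
Qed.

Lemma unimodal_steps : unimodal h.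
Proof. by exists m; split=> i j; [exact: nondecr_upto | exact: nonincr_from]. Qed.

Lemma is_max_deg_steps : is_max_deg h m.
Proof.
move=> i; case: (leqP i m) => [le_im | /ltnW le_mi]; first exact: nondecr_upto.
exact: nonincr_from.
Qed.

End UnimodalSteps.

Lemma first_max_deg_eq (h : nat -> nat) m p :
  is_max_deg h m -> (forall j, j < m -> h j < h m) -> first_max_deg h p -> p = m.
Proof.
move=> max_m lt_m [max_p first_p]; case: (ltngtP p m) => // [lt_pm | lt_mp].
- by have := max_p m; rewrite leqNgt lt_m.
- by case: (first_p m lt_mp).
Qed.

Section SupportPrefix.
Variables (h : nat -> nat) (D : nat).
Hypothesis h_eq0 : forall i, (h i == 0) = (D < i).

Lemma socle_deg_prefix : socle_deg h D.
Proof.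
split=> [|i lt_Di]; last by apply/eqP; rewrite h_eq0.
by move/eqP; rewrite h_eq0 ltnn.
Qed.

Lemma symmetric_hsE : symmetric_hs h <-> forall i, i <= D -> h (D - i) = h i.
Proof.
have h_neq0 i : h i <> 0 <-> i <= D by rewrite leqNgt -h_eq0; split=> /eqP.
split=> [[p [q [le_pq [supp sym]]]] | sym].
  have p0 : p = 0 by have /supp := (h_neq0 0).2 (leq0n D); lia.
  have qD : q = D.
    have le_qD : q <= D by apply/h_neq0/supp; rewrite le_pq leqnn.
    by have /supp := (h_neq0 D).2 (leqnn D); lia.
  by move=> i le_iD; rewrite -(add0n i) -p0 sym p0 qD ?subn0.
exists 0, D; split=> //; split=> [i | i]; first by rewrite h_neq0.
by rewrite subn0 add0n => /sym.
Qed.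

End SupportPrefix.

Section Hext.
Variables (h : nat -> nat) (D : nat).

Lemma hext_nat i : i <= D -> hext h D i = h i.
Proof. by move=> le_iD; rewrite /hext ifT //; lia. Qed.

Lemma hext_sub i : i <= D -> hext h D (D%:Z - i%:Z) = h (D - i).
Proof. by move=> le_iD; rewrite /hext ifT; [congr h; lia | lia]. Qed.

Lemma hext_predS i : i < D -> hext h D (i.+1%:Z - 1) = h i.
Proof. by move=> lt_iD; rewrite /hext ifT; [congr h; lia | lia]. Qed.

Lemma hext_subS i : i < D -> hext h D (D%:Z - i.+1%:Z + 1) = h (D - i).
Proof. by move=> lt_iD; rewrite /hext ifT; [congr h; lia | lia]. Qed.

Lemma hext_pred0 : hext h D (0%:Z - 1) = 0.
Proof. by []. Qed.

Lemma hext_succD : hext h D (D%:Z - 0%:Z + 1) = 0.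
Proof. by rewrite /hext ifF //; lia. Qed.

End Hext.

(* The two alternatives of [almost_centered], with the vanishing terms h_(-1)
   and h_(D+1) dropped and the index of the other outer term shifted by one. *)
Definition almost_centered1 (h : nat -> nat) (D : nat) : Prop :=
  (forall i, i + i <= D -> h (D - i) <= h i) /\
  (forall i, i.+1 + i.+1 <= D -> h i <= h (D - i.+1)).

Definition almost_centered2 (h : nat -> nat) (D : nat) : Prop :=
  (forall i, i + i <= D -> h i <= h (D - i)) /\
  (forall i, i.+1 + i.+1 <= D -> h (D - i) <= h i.+1).

Lemma almost_centeredE h D :
  almost_centered h D <-> almost_centered1 h D \/ almost_centered2 h D.
Proof.
have half i : (i <= D./2) = (i + i <= D) by rewrite geq_half_double -addnn.
split=> [[C|C] | [[C1 C2] | [C1 C2]]]; [left | right | left | right].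
- split=> i i_le.
    have /andP[_] := C i (etrans (half i) i_le).
    by rewrite hext_sub ?hext_nat //; lia.
  have /andP[+ _] := C i.+1 (etrans (half _) i_le).
  by rewrite hext_predS ?hext_sub //; lia.
- split=> i i_le.
    have /andP[_] := C i (etrans (half i) i_le).
    by rewrite hext_sub ?hext_nat //; lia.
  have /andP[+ _] := C i.+1 (etrans (half _) i_le).
  by rewrite hext_subS ?hext_nat //; lia.
- case=> [|i]; rewrite half => i_le.
    by rewrite hext_pred0 hext_sub ?hext_nat ?C1.
  have lt_iD : i < D by lia.
  by rewrite hext_predS // hext_sub // hext_nat // C1 // C2.
- case=> [|i]; rewrite half => i_le.
    by rewrite hext_succD hext_sub ?hext_nat ?C1.
  have lt_iD : i < D by lia.
  by rewrite hext_subS // hext_sub // hext_nat // C1 // C2.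
Qed.

(* [piecewise_lia] case-splits every truncated subtraction and [minn],
   innermost first, replacing it by a fresh variable (which also eliminates x
   through x = (x - y) + y when y < x) and pruning infeasible branches; on the
   goals below this is far faster than a single call to [lia]. *)
Ltac has_kink t :=
  idtac; match t with context [subn _ _] => idtac | context [minn _ _] => idtac end.

Ltac split_kink :=
  match goal with
  | |- context [subn ?x ?y] =>
      assert_fails (has_kink x); assert_fails (has_kink y);
      let d := fresh "d" in let E := fresh "E" in
      have E : (x <= y /\ 0 = x - y) \/ (y < x /\ x - y + y = x); [lia|];
      set d := subn x y in E |- *; clearbody d; case: E => [[? ?] | [? ?]]; subst
  | |- context [minn ?x ?y] =>
      assert_fails (has_kink x); assert_fails (has_kink y);
      let d := fresh "d" in let E := fresh "E" in
      have E : (x <= y /\ minn x y = x) \/ (y < x /\ minn x y = y); [lia|];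
      set d := minn x y in E |- *; clearbody d; case: E => [[? ?] | [? ?]]; subst
  end.

Ltac piecewise_lia := repeat (split_kink; try (exfalso; lia)); lia.

Section HilbF.
Variables a b al be : nat.
Hypotheses (al_gt0 : 0 < al) (lt_al_a : al < a) (be_gt0 : 0 < be) (lt_be_b : be < b)
  (le_ab : a + be <= b + al).

Local Notation g := (hilbF a b al be).
Local Notation D := (b + al - 2).
Local Notation peak := (minn a (minn b (al + be)) - 1).

Lemma hilbF_rise i : i <= peak -> g i = i.+1.
Proof. by rewrite /hilbF; piecewise_lia. Qed.

Lemma hilbF_peak_alt : g (minn a (be + al) - 1) = g peak.
Proof. by rewrite /hilbF; piecewise_lia. Qed.

Lemma hilbF_eq0 i : (g i == 0) = (D < i).
Proof. by rewrite /hilbF; piecewise_lia. Qed.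

Lemma hilbF_ci i : b = a + be -> g i = minn (minn i.+1 (D.+1 - i)) (minn a (al + be)).
Proof. by move=> b_eq; subst b; rewrite /hilbF; piecewise_lia. Qed.

Lemma hilbF_step i :
  g i.+1 + (a <= i.+1) + (b <= i.+1) + (al + be <= i.+1)
  = g i + 1 + (a + be <= i.+1) + (b + al <= i.+1).
Proof. by rewrite /hilbF; piecewise_lia. Qed.

Lemma hilbF_fall i : peak <= i -> g i.+1 <= g i /\ g i - g i.+1 <= 2.
Proof. by have := hilbF_step i; lia. Qed.

Lemma hilbF_sym i : b = a + be -> i <= D -> g (D - i) = g i.
Proof.
move=> b_eq le_iD; rewrite !hilbF_ci // (_ : D.+1 - (D - i) = i.+1); last lia.
by rewrite (_ : (D - i).+1 = D.+1 - i) 1?[minn i.+1 _]minnC //; lia.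
Qed.

Lemma hilbF_asym : a + be <> b -> exists2 i, i <= D & g (D - i) <> g i.
Proof.
by move=> ne_b; exists (minn peak (b + al - (a + be))); rewrite /hilbF; piecewise_lia.
Qed.

Lemma hilbF_centered1 : b = (a + be).+1 -> almost_centered1 g D.
Proof. by move=> b_eq; subst b; split=> i; rewrite /hilbF; piecewise_lia. Qed.

Lemma hilbF_centered2 : b <= a + be -> a <= al.+1 \/ be <= 1 \/ a + be <= b.+1 ->
  almost_centered2 g D.
Proof.
move=> le_b not_wide.
have [a_eq | [be_eq | near_sym]] : a = al.+1 \/ be = 1 \/ a + be <= b.+1 by lia.
- by subst a; split=> i; rewrite /hilbF; piecewise_lia.
- by subst be; split=> i; rewrite /hilbF; piecewise_lia.
- by split=> i; rewrite /hilbF; piecewise_lia.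
Qed.

Lemma hilbF_not_centered1 :
  a + be + 2 <= b \/ [/\ al + 2 <= a, 2 <= be & b + 2 <= a + be] -> ~ almost_centered1 g D.
Proof.
case=> [lt_b | [? ? ?]] [C1 C2].
- by move: (C2 (minn a (al + be) - 1)); rewrite /hilbF; piecewise_lia.
- by move: (C1 (b + al - (a + be))); rewrite /hilbF; piecewise_lia.
Qed.

Lemma hilbF_not_centered2 :
  a + be + 2 <= b \/ [/\ al + 2 <= a, 2 <= be & b + 2 <= a + be] -> ~ almost_centered2 g D.
Proof.
case=> [lt_b | [? ? ?]] [C1 C2].
- by move: (C1 (minn a (al + be) - 1)); rewrite /hilbF; piecewise_lia.
- by move: (C2 (minn al (b - be) - 1)); rewrite /hilbF; piecewise_lia.
Qed.

Lemma hilbF_not_almost_centered :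
  ~ (almost_centered1 g D \/ almost_centered2 g D) <->
  a + be + 2 <= b \/ [/\ al + 2 <= a, 2 <= be & b + 2 <= a + be].
Proof.
split=> [nac | R [/(hilbF_not_centered1 R) | /(hilbF_not_centered2 R)] //].
case: (leqP (a + be + 2) b) => [|lt_b]; first by left.
case: (boolP [&& al + 2 <= a, 2 <= be & b + 2 <= a + be]) => [/and3P | nB]; first by right.
case: nac; case: (leqP b (a + be)) => le_b.
- by right; apply: hilbF_centered2 => //; move: nB; lia.
- by left; apply: hilbF_centered1; lia.
Qed.

End HilbF.

Theorem lemma3p4 (k : fieldType) (a b al be : nat) :
  1 <= al -> al < a -> 1 <= be -> be < b -> a + be <= b + al ->
  let h := hilb k a b al be in
  unimodal h /\
  (forall p, first_max_deg h p -> forall i, 1 <= i -> i <= p -> h i = (h i.-1).+1) /\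
  (forall p, first_max_deg h p -> forall i, p <= i ->
      h i.+1 <= h i /\ h i - h i.+1 <= 2) /\
  is_max_deg h (minn a (be + al) - 1) /\
  socle_deg h (b + al - 2) /\
  (symmetric_hs h <-> a + be = b) /\
  (~ almost_centered h (b + al - 2) <->
     (a + be + 2 <= b \/ [/\ al + 2 <= a, 2 <= be & b + 2 <= a + be])).
Proof.
move=> al_gt0 lt_al_a be_gt0 lt_be_b le_ab h.
have -> : h = hilbF a b al be by apply: functional_extensionality; exact: hilbE.
set g := hilbF a b al be; set peak := minn a (minn b (al + be)) - 1.
have rise i : i <= peak -> g i = i.+1 by exact: hilbF_rise.
have fall i : peak <= i -> g i.+1 <= g i /\ g i - g i.+1 <= 2 by exact: hilbF_fall.
have up i : i < peak -> g i <= g i.+1 by move=> lt_ip; rewrite !rise // ltnW.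
have down i : peak <= i -> g i.+1 <= g i by case/fall.
have first_peak p : first_max_deg g p -> p = peak.
  apply: first_max_deg_eq; first exact: is_max_deg_steps up down.
  by move=> j lt_jp; rewrite !rise // ltnW.
have g_eq0 i : (g i == 0) = (b + al - 2 < i) by exact: hilbF_eq0.
split; first exact: unimodal_steps up down.
split; first by move=> p /first_peak-> i i_gt0 le_ip; rewrite !rise ?prednK //; lia.
split; first by move=> p /first_peak-> i /fall.
split; first by move=> i; rewrite /g hilbF_peak_alt //; exact: is_max_deg_steps up down i.
split; first exact: socle_deg_prefix.
split.
  rewrite (symmetric_hsE g_eq0); split=> [sym | b_eq i]; last exact: hilbF_sym.
  apply/eqP; apply: contraT => /eqP ne.
  have [i le_iD []] : exists2 i, i <= b + al - 2 & g (b + al - 2 - i) <> g i.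
    exact: hilbF_asym.
  exact: sym.
by rewrite almost_centeredE; exact: hilbF_not_almost_centered.
Qed.
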